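(* (i) Let $v_2^\star$ denote the Switcher's optimal value function (for fixed Exploiter policy $\pi^{\mathrm{exploit}}$) and $\mathcal M$ the intervention operator associated with the optimal exploration policy. Then the optimal Switcher's intervention times are given recursively by $$\tau_k=\inf\{t>\tau_{k-1}: (\mathcal M v_2^\star)(s_t)=v_2^\star(s_t)\}.$$ (ii) For $l>0$, denote by $\mu_l(\mathfrak g)$ the number of switch activations performed by the Switcher under its (optimal) switching policy $\mathfrak g$ when $\max_{(s,a)\in\mathcal S\times\mathcal A}L(s,a)=l$. Then $\lim_{l\to0}\mu_l(\mathfrak g)=0$.
   Context: Setting (a two-agent game). $\mathcal S$ is a countable state space, $\mathcal A$ a finite action set, $\mathcal A^{\mathrm{exploit}},\mathcal A^{\mathrm{xplr}}\subseteq\mathcal A$; $P(s'\mid a,s)$ is a transition kernel; $L:\mathcal S\times\mathcal A\to[0,\infty)$ is a bounded uncertainty measure; $\gamma\in(0,1)$; $\beta>0$ is an intervention cost. The Exploiter has a Markov policy $\pi^{\mathrm{exploit}}$; the Switcher has an exploration policy $\pi^{\mathrm{xplr}}$ and a switching rule $\mathfrak g:\mathcal S\to\{0,1\}$. At time $t$, if $\mathfrak g(s_t)=1$ (an intervention), the action $a_t\sim\pi^{\mathrm{xplr}}(\cdot\mid s_t)$ is applied and the Switcher receives $-L(s_t,a_t)-\beta$; otherwise $a_t\sim\pi^{\mathrm{exploit}}(\cdot\mid s_t)$ is applied and the Switcher receives $-L(s_t,a_t)$; then $s_{t+1}\sim P(\cdot\mid a_t,s_t)$. The Switcher's value is $v_2(s)=\mathbb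 E[\sum_{t\ge0}\gamma^t r_t\mid s_0=s]$ with $r_t$ its reward at time $t$; the optimal value $v_2^\star$ is the supremum over $(\pi^{\mathrm{xplr}},\mathfrak g)$. Intervention times: $\tau_0=0$ and $\tau_k=\inf\{t>\tau_{k-1}:\mathfrak g(s_t)=1\}$. Intervention operator: for $v:\mathcal S\to\mathbb R$, $(\mathcal M v)(s)=\sum_{a}\pi^{\mathrm{xplr}}(a\mid s)\big[-L(s,a)-\beta+\gamma\sum_{s'}P(s'\mid a,s)v(s')\big]$. Standing assumption: every switching policy performs only finitely many interventions. *)

From Stdlib Require Import Reals List.
From Coquelicot Require Import Coquelicot.
From mathcomp Require Import ssreflect ssrbool eqtype choice fintype.

Set Implicit Arguments.
Unset Strict Implicit.
Open Scope R_scope.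

(* Sum over a countable type, through its canonical enumeration by nat
   (each element appears exactly once; used only for absolutely summable f). *)
Definition enc_seq {St : countType} (f : St -> R) (n : nat) : R :=
  match @pickle_inv St n with Some x => f x | None => 0 end.
Definition sumS {St : countType} (f : St -> R) : R := Series (enc_seq f).

Definition sumA {A : finType} (f : A -> R) : R :=
  fold_right (fun a acc => f a + acc) 0 (enum A).

Definition is_distS {St : countType} (d : St -> R) : Prop :=
  (forall x, 0 <= d x) /\ ex_series (enc_seq d) /\ sumS d = 1.
Definition is_distA {A : finType} (d : A -> R) : Prop :=
  (forall a, 0 <= d a) /\ sumA d = 1.

(* P s a s' = P(s' | a, s) ; pi s a = pi(a | s) (stationary Markov policy) *)
Definition is_kernel {St : countType} {A : finType} (P : St -> A -> St -> R) :=
  forall s a, is_distS (P s a).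
Definition is_policy {St : countType} {A : finType} (pi : St -> A -> R) :=
  forall s, is_distA (pi s).

Section Game.
Context {St : countType} {A : finType}.
Variables (P : St -> A -> St -> R) (piE : St -> A -> R) (gamma beta : R)
          (L : St -> A -> R).

Definition act_dist (piX : St -> A -> R) (g : St -> bool) (s : St) : A -> R :=
  if g s then piX s else piE s.

Definition reward (piX : St -> A -> R) (g : St -> bool) (s : St) : R :=
  sumA (fun a => act_dist piX g s a * (- L s a - (if g s then beta else 0))).

Fixpoint state_dist (piX : St -> A -> R) (g : St -> bool) (s0 : St) (t : nat)
  : St -> R :=
  match t with
  | O => fun s => if s == s0 then 1 else 0
  | Datatypes.S t' => fun s' =>
      sumS (fun s => state_dist piX g s0 t' s *
                     sumA (fun a => act_dist piX g s a * P s a s'))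
  end.

Definition exp_reward piX g s0 (t : nat) : R :=
  sumS (fun s => state_dist piX g s0 t s * reward piX g s).

Definition value piX g (s0 : St) : R :=
  Series (fun t => gamma ^ t * exp_reward piX g s0 t).

Definition vstar (s : St) : R :=
  real (Lub_Rbar (fun x => exists piX g, is_policy piX /\ x = value piX g s)).

Definition is_optimal piX g : Prop :=
  is_policy piX /\ forall s, value piX g s = vstar s.

Definition Mop (piX : St -> A -> R) (v : St -> R) (s : St) : R :=
  sumA (fun a => piX s a *
                 (- L s a - beta + gamma * sumS (fun s' => P s a s' * v s'))).

Definition gstar (piX : St -> A -> R) (v : St -> R) (s : St) : bool :=
  if Req_EM_T (Mop piX v s) (v s) then true else false.

End Game.

Definition mu {St : countType} {A : finType} (P : St -> A -> St -> R)
  (piE piX : St -> A -> R) (g : St -> bool) (s0 : St) : Rbar :=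
  Lim_seq (sum_n (fun t =>
    sumS (fun s => state_dist P piE piX g s0 t s * (if g s then 1 else 0)))).

(* For a fixed switching rule g the Switcher's value is the expected discounted
   reward of the Markov chain driven by g, hence the unique bounded solution of
   the Bellman equation v = r_g + gamma K_g v.
   (i) An optimal g0 can only intervene where M v* = v*, so v* also solves the
   Bellman equation of the rule that intervenes exactly there, and uniqueness
   identifies its value with v*.
   (ii) An intervention at s forces v*(s) <= -beta, whereas never intervening
   already guarantees v*(s) >= -l/(1 - gamma), which exceeds -beta once
   l < beta (1 - gamma); so an optimal rule never intervenes and mu = 0. *)

From Pilot Require Import Defs.
From Stdlib Require Import Reals Lra.
From Coquelicot Require Import Coquelicot.
From mathcomp Require Import ssreflect ssrbool eqtype ssrnat choice fintype.
Open Scope R_scope.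

Section RealSeries.
Implicit Types (a : nat -> R) (F : nat -> nat -> R).

Lemma sum_n_ge0 a N : (forall n, 0 <= a n) -> 0 <= sum_n a N.
Proof.
move=> a_ge0; elim: N => [|N IH]; rewrite ?sum_O ?sum_Sn //.
by have := a_ge0 N.+1; rewrite /plus /=; lra.
Qed.

Lemma sum_n_le_succ a N : (forall n, 0 <= a n) -> sum_n a N <= sum_n a N.+1.
Proof. by move=> a_ge0; rewrite sum_Sn /plus /=; have := a_ge0 N.+1; lra. Qed.

Lemma sum_n_le_Series a N :
  (forall n, 0 <= a n) -> ex_series a -> sum_n a N <= Series a.
Proof.
move=> a_ge0 a_ex; apply: (is_lim_seq_incr_compare (sum_n a)).
  exact: Series_correct.
by move=> n; apply: sum_n_le_succ.
Qed.

Lemma Series_ge0 a : (forall n, 0 <= a n) -> ex_series a -> 0 <= Series a.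
Proof.
move=> a_ge0 a_ex; apply: Rle_trans (sum_n_le_Series a 0 a_ge0 a_ex).
by rewrite sum_O.
Qed.

Lemma Series_le_ex a b :
  ex_series a -> ex_series b -> (forall n, a n <= b n) -> Series a <= Series b.
Proof.
move=> a_ex b_ex le_ab.
apply: (is_lim_seq_le (sum_n a) (sum_n b) (Series a) (Series b)).
- by move=> N; apply: sum_n_m_le.
- exact: Series_correct.
- exact: Series_correct.
Qed.

Lemma ex_series_nonneg_bounded a M :
  (forall n, 0 <= a n) -> (forall N, sum_n a N <= M) ->
  ex_series a /\ Series a <= M.
Proof.
move=> a_ge0 a_le.
have [l a_l] : ex_finite_lim_seq (sum_n a).
  by apply: (ex_finite_lim_seq_incr _ M) => // n; apply: sum_n_le_succ.
rewrite (is_series_unique a l a_l); split; first by exists l.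
exact: (is_lim_seq_le _ _ _ _ a_le a_l (is_lim_seq_const M)).
Qed.

Lemma is_series_spike a k : (forall n, n <> k -> a n = 0) -> is_series a (a k).
Proof.
move=> a_spike.
have partial N : sum_n a N = if (k <= N)%N then a k else 0.
  elim: N => [|N IH].
    by rewrite sum_O; case: k a_spike => [|k] a_spike //=; apply: a_spike.
  rewrite sum_Sn IH /plus /=; case: (ltngtP k N.+1) => [lt_kN|lt_Nk|eq_kN].
  - move: (lt_kN); rewrite ltnS => ->; rewrite (a_spike N.+1); first lra.
    by move=> E; move: lt_kN; rewrite E ltnn.
  - rewrite leqNgt (ltnW lt_Nk) (a_spike N.+1) /=; first lra.
    by move=> E; move: lt_Nk; rewrite E ltnn.
  - by rewrite eq_kN ltnn; lra.
suff : is_lim_seq (sum_n a) (a k) by [].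
apply/(is_lim_seq_incr_n _ k).
apply: is_lim_seq_ext (is_lim_seq_const (a k)) => n.
by rewrite partial leq_addl.
Qed.

Lemma term_le_Series a k : (forall n, 0 <= a n) -> ex_series a -> a k <= Series a.
Proof.
move=> a_ge0 a_ex.
pose spike n := if n == k then a k else 0.
have -> : a k = Series spike.
  have spike_k : spike k = a k by rewrite /spike eqxx.
  rewrite -[LHS]spike_k; symmetry; apply: is_series_unique; apply: is_series_spike.
  by move=> n /eqP; rewrite /spike => /negbTE ->.
apply: Series_le a_ex => n; have := a_ge0 n; rewrite /spike; case: eqP => [->|_]; lra.
Qed.

Lemma is_series_sum_n F M : (forall j, ex_series (fun i => F i j)) ->
  is_series (fun i => sum_n (F i) M) (sum_n (fun j => Series (fun i => F i j)) M).
Proof.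
move=> col_ex; elim: M => [|M IH].
  rewrite sum_O; apply: is_series_ext (Series_correct _ (col_ex 0%N)) => i.
  by rewrite sum_O.
rewrite sum_Sn.
apply: is_series_ext (is_series_plus _ _ _ _ IH (Series_correct _ (col_ex M.+1))) => i.
by rewrite sum_Sn.
Qed.

Lemma Series_swap_le F :
  (forall i j, 0 <= F i j) -> (forall i, ex_series (F i)) ->
  ex_series (fun i => Series (F i)) ->
  (forall j, ex_series (fun i => F i j)) /\
  ex_series (fun j => Series (fun i => F i j)) /\
  Series (fun j => Series (fun i => F i j)) <= Series (fun i => Series (F i)).
Proof.
move=> F_ge0 row_ex rows_ex.
have rows_ge0 i : 0 <= Series (F i) by apply: Series_ge0.
have col_ex j : ex_series (fun i => F i j).
  apply: (proj1 (ex_series_nonneg_bounded _ (Series (fun i => Series (F i))) _ _)) => // N.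
  apply: Rle_trans (sum_n_le_Series _ N rows_ge0 rows_ex).
  by apply: sum_n_m_le => i; apply: term_le_Series.
have cols_ge0 j : 0 <= Series (fun i => F i j).
  by apply: Series_ge0 => // i.
have partial_cols_le M :
    sum_n (fun j => Series (fun i => F i j)) M <= Series (fun i => Series (F i)).
  rewrite -(is_series_unique _ _ (is_series_sum_n F M col_ex)).
  apply: Series_le rows_ex => i; split; first exact: sum_n_ge0.
  exact: sum_n_le_Series.
by have [cols_ex cols_le] := ex_series_nonneg_bounded _ _ cols_ge0 partial_cols_le.
Qed.

Lemma Series_swap_nonneg F :
  (forall i j, 0 <= F i j) -> (forall i, ex_series (F i)) ->
  ex_series (fun i => Series (F i)) ->
  (forall j, ex_series (fun i => F i j)) /\
  ex_series (fun j => Series (fun i => F i j)) /\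
  Series (fun j => Series (fun i => F i j)) = Series (fun i => Series (F i)).
Proof.
move=> F_ge0 row_ex rows_ex.
have [col_ex [cols_ex le_cols]] := Series_swap_le _ F_ge0 row_ex rows_ex.
have [_ [_ le_rows]] := Series_swap_le _ (fun j i => F_ge0 i j) col_ex cols_ex.
by do 2![split => //]; apply: Rle_antisym.
Qed.

Lemma is_series_zero : is_series (fun _ : nat => 0) 0.
Proof. exact: (is_series_spike (fun _ => 0) 0). Qed.

End RealSeries.

Notation summable f := (ex_series (enc_seq f)).

Section CountableSums.
Context {St : countType}.
Implicit Types (f g : St -> R) (x : St).

Lemma enc_seq_pickle f x : enc_seq f (pickle x) = f x.
Proof. by rewrite /enc_seq pickleK_inv. Qed.

Lemma enc_seq_map (h : R -> R) f n :
  h 0 = 0 -> enc_seq (fun x => h (f x)) n = h (enc_seq f n).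
Proof. by rewrite /enc_seq; case: pickle_inv. Qed.

Lemma enc_seq_map2 (h : R -> R -> R) f g n :
  h 0 0 = 0 -> enc_seq (fun x => h (f x) (g x)) n = h (enc_seq f n) (enc_seq g n).
Proof. by rewrite /enc_seq; case: pickle_inv. Qed.

Lemma enc_seq_ext f g n : (forall x, f x = g x) -> enc_seq f n = enc_seq g n.
Proof. by move=> eq_fg; rewrite /enc_seq; case: pickle_inv. Qed.

Lemma sumS_ext f g : (forall x, f x = g x) -> sumS f = sumS g.
Proof. by move=> eq_fg; apply: Series_ext => n; apply: enc_seq_ext. Qed.

Lemma summable_ext f g : (forall x, f x = g x) -> summable f -> summable g.
Proof. by move=> eq_fg; apply: ex_series_ext => n; apply: enc_seq_ext. Qed.

Lemma summable_le f g :
  (forall x, Rabs (f x) <= g x) -> summable g -> summable f.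
Proof.
move=> le_fg; apply: ex_series_le => n; rewrite /norm /= /abs /= /enc_seq.
by case: pickle_inv => [x|]; rewrite ?Rabs_R0; [apply: le_fg | lra].
Qed.

Lemma summable_scal_l c f : summable f -> summable (fun x => c * f x).
Proof.
move=> f_ex; apply: ex_series_ext (ex_series_scal_l c _ f_ex) => n.
by rewrite (enc_seq_map (Rmult c)) ?Rmult_0_r.
Qed.

Lemma summable_scal_r c f : summable f -> summable (fun x => f x * c).
Proof.
move=> f_ex; apply: ex_series_ext (ex_series_scal_r c _ f_ex) => n.
by rewrite (enc_seq_map (fun y => y * c)) ?Rmult_0_l.
Qed.

Lemma summable_plus f g : summable f -> summable g -> summable (fun x => f x + g x).
Proof.
move=> f_ex g_ex; apply: ex_series_ext (ex_series_plus _ _ f_ex g_ex) => n.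
by rewrite (enc_seq_map2 Rplus) ?Rplus_0_r.
Qed.

Lemma summable_zero : summable (fun _ : St => 0).
Proof.
exists 0; apply: is_series_ext is_series_zero => n.
by rewrite /enc_seq; case: pickle_inv.
Qed.

Lemma sumS_zero : sumS (fun _ : St => 0) = 0.
Proof.
rewrite /sumS (Series_ext _ (fun _ => 0)); first exact: is_series_unique is_series_zero.
by move=> n; rewrite /enc_seq; case: pickle_inv.
Qed.

Lemma sumS_plus f g : summable f -> summable g ->
  sumS (fun x => f x + g x) = sumS f + sumS g.
Proof.
move=> f_ex g_ex; rewrite /sumS -Series_plus //; apply: Series_ext => n.
by rewrite (enc_seq_map2 Rplus) ?Rplus_0_r.
Qed.

Lemma sumS_minus f g : summable f -> summable g ->
  sumS (fun x => f x - g x) = sumS f - sumS g.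
Proof.
move=> f_ex g_ex; rewrite /sumS -Series_minus //; apply: Series_ext => n.
by rewrite (enc_seq_map2 Rminus) ?Rminus_0_r.
Qed.

Lemma sumS_scal_l c f : sumS (fun x => c * f x) = c * sumS f.
Proof.
rewrite /sumS -Series_scal_l; apply: Series_ext => n.
by rewrite (enc_seq_map (Rmult c)) ?Rmult_0_r.
Qed.

Lemma sumS_scal_r c f : sumS (fun x => f x * c) = sumS f * c.
Proof.
rewrite /sumS -Series_scal_r; apply: Series_ext => n.
by rewrite (enc_seq_map (fun y => y * c)) ?Rmult_0_l.
Qed.

Lemma sumS_opp f : sumS (fun x => - f x) = - sumS f.
Proof.
rewrite /sumS -Series_opp; apply: Series_ext => n.
by rewrite (enc_seq_map Ropp) ?Ropp_0.
Qed.

Lemma sumS_le f g : summable f -> summable g -> (forall x, f x <= g x) ->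
  sumS f <= sumS g.
Proof.
move=> f_ex g_ex le_fg; apply: Series_le_ex => // n.
by rewrite /enc_seq; case: pickle_inv => [x|]; [apply: le_fg | lra].
Qed.

Lemma sumS_ge0 f : (forall x, 0 <= f x) -> summable f -> 0 <= sumS f.
Proof.
move=> f_ge0 f_ex; apply: Series_ge0 f_ex => n.
by rewrite /enc_seq; case: pickle_inv => [x|]; [apply: f_ge0 | lra].
Qed.

Lemma le_sumS f x : (forall x, 0 <= f x) -> summable f -> f x <= sumS f.
Proof.
move=> f_ge0 f_ex; rewrite -(enc_seq_pickle f x); apply: term_le_Series => // n.
by rewrite /enc_seq; case: pickle_inv => [y|]; [apply: f_ge0 | lra].
Qed.

Lemma sumS_point f x0 : (forall x, x <> x0 -> f x = 0) ->
  summable f /\ sumS f = f x0.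
Proof.
move=> f_point.
have f_series : is_series (enc_seq f) (enc_seq f (pickle x0)).
  apply: is_series_spike => n neq_n; rewrite /enc_seq.
  case E: (pickle_inv n) => [x|] //; apply: f_point => eq_x.
  by apply: neq_n; have := @pickle_invK St n; rewrite E /= eq_x.
rewrite /sumS (is_series_unique _ _ f_series) enc_seq_pickle.
by split; first by exists (enc_seq f (pickle x0)).
Qed.

Lemma sumS_Series_swap_nonneg (F : St -> nat -> R) :
  (forall x t, 0 <= F x t) -> (forall x, ex_series (F x)) ->
  summable (fun x => Series (F x)) ->
  ex_series (fun t => sumS (fun x => F x t)) /\
  Series (fun t => sumS (fun x => F x t)) = sumS (fun x => Series (F x)).
Proof.
move=> F_ge0 row_ex rows_ex.
pose G n t := enc_seq (fun x => F x t) n.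
have G_ge0 n t : 0 <= G n t.
  by rewrite /G /enc_seq; case: pickle_inv => [x|]; [apply: F_ge0 | lra].
have G_row_ex n : ex_series (G n).
  rewrite /G /enc_seq; case: pickle_inv => [x|]; first exact: row_ex.
  by exists 0; apply: is_series_zero.
have G_rows n : Series (G n) = enc_seq (fun x => Series (F x)) n.
  rewrite /G /enc_seq; case: pickle_inv => [x|] //.
  exact: is_series_unique is_series_zero.
have G_rows_ex : ex_series (fun n => Series (G n)).
  by apply: ex_series_ext rows_ex => n; rewrite G_rows.
have [_ [G_cols_ex G_swap]] := Series_swap_nonneg _ G_ge0 G_row_ex G_rows_ex.
by split; [exact: G_cols_ex | rewrite G_swap; apply: Series_ext].
Qed.

Lemma sumS_swap_nonneg (F : St -> St -> R) :
  (forall x y, 0 <= F x y) -> (forall x, summable (F x)) ->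
  summable (fun x => sumS (F x)) ->
  summable (fun y => sumS (fun x => F x y)) /\
  sumS (fun y => sumS (fun x => F x y)) = sumS (fun x => sumS (F x)).
Proof.
move=> F_ge0 row_ex rows_ex.
have G_ge0 x m : 0 <= enc_seq (F x) m.
  by rewrite /enc_seq; case: pickle_inv => [y|]; [apply: F_ge0 | lra].
have [cols_ex swap] := sumS_Series_swap_nonneg _ G_ge0 row_ex rows_ex.
have cols m : enc_seq (fun y => sumS (fun x => F x y)) m = sumS (fun x => enc_seq (F x) m).
  rewrite /enc_seq; case: pickle_inv => [y|] //; by rewrite sumS_zero.
split; first by apply: ex_series_ext cols_ex => m; rewrite cols.
by rewrite -swap; apply: Series_ext.
Qed.

Lemma sumS_dist_bound d w lo hi : is_distS d -> (forall x, lo <= w x <= hi) ->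
  summable (fun x => d x * w x) /\ lo <= sumS (fun x => d x * w x) <= hi.
Proof.
move=> [d_ge0 [d_ex d_sum]] w_bound.
have dw_ex : summable (fun x => d x * w x).
  apply: (summable_le _ (fun x => d x * Rmax hi (- lo))); last exact: summable_scal_r.
  move=> x; rewrite Rabs_mult Rabs_pos_eq //.
  by apply: Rmult_le_compat_l => //; apply: Rabs_le_between_Rmax.
have sum_const c : sumS (fun x => d x * c) = c by rewrite sumS_scal_r d_sum Rmult_1_l.
split => //; split.
- rewrite -{1}(sum_const lo); apply: sumS_le; rewrite //; first exact: summable_scal_r.
  by move=> x; apply: Rmult_le_compat_l => //; case: (w_bound x).
- rewrite -(sum_const hi); apply: sumS_le; rewrite //; first exact: summable_scal_r.
  by move=> x; apply: Rmult_le_compat_l => //; case: (w_bound x).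
Qed.

Lemma distS_le1 d x : is_distS d -> d x <= 1.
Proof. by move=> [d_ge0 [d_ex <-]]; apply: le_sumS. Qed.

Lemma sumS_mixture_swap d (G : St -> St -> R) C :
  is_distS d -> (forall y x, 0 <= G y x) -> (forall y, summable (G y)) ->
  (forall y, sumS (G y) <= C) ->
  sumS (fun x => sumS (fun y => d y * G y x)) = sumS (fun y => d y * sumS (G y)).
Proof.
move=> d_dist G_ge0 G_ex G_le.
have [d_ge0 _] := d_dist.
pose F y x := d y * G y x.
have F_ge0 y x : 0 <= F y x by apply: Rmult_le_pos.
have F_row_ex y : summable (F y) by apply: summable_scal_l.
have F_rows y : sumS (F y) = d y * sumS (G y) by rewrite sumS_scal_l.
have G_sum_bound y : 0 <= sumS (G y) <= C by split; [apply: sumS_ge0 | apply: G_le].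
have F_rows_ex : summable (fun y => sumS (F y)).
  apply: summable_ext (proj1 (sumS_dist_bound _ _ _ _ d_dist G_sum_bound)) => y.
  by rewrite F_rows.
have [_ swap] := sumS_swap_nonneg _ F_ge0 F_row_ex F_rows_ex.
by rewrite swap; apply: sumS_ext.
Qed.

End CountableSums.

Section FiniteSums.
Context {A : finType}.
Implicit Types (f g : A -> R) (a : A).

Lemma sumA_ext f g : (forall a, f a = g a) -> sumA f = sumA g.
Proof. by move=> eq_fg; rewrite /sumA; elim: (enum A) => [|a s IH] //=; rewrite eq_fg IH. Qed.

Lemma sumA_plus f g : sumA (fun a => f a + g a) = sumA f + sumA g.
Proof. by rewrite /sumA; elim: (enum A) => [|a s IH] /=; rewrite ?IH; ring. Qed.

Lemma sumA_scal_l c f : sumA (fun a => c * f a) = c * sumA f.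
Proof. by rewrite /sumA; elim: (enum A) => [|a s IH] /=; rewrite ?IH; ring. Qed.

Lemma sumA_scal_r c f : sumA (fun a => f a * c) = sumA f * c.
Proof. by rewrite /sumA; elim: (enum A) => [|a s IH] /=; rewrite ?IH; ring. Qed.

Lemma sumA_le f g : (forall a, f a <= g a) -> sumA f <= sumA g.
Proof.
move=> le_fg; rewrite /sumA; elim: (enum A) => [|a s IH] /=; first lra.
by have := le_fg a; lra.
Qed.

Lemma sumA_dist_bound d w lo hi : is_distA d -> (forall a, lo <= w a <= hi) ->
  lo <= sumA (fun a => d a * w a) <= hi.
Proof.
move=> [d_ge0 d_sum] w_bound.
have sum_const c : sumA (fun a => d a * c) = c by rewrite sumA_scal_r d_sum Rmult_1_l.
split; [rewrite -{1}(sum_const lo) | rewrite -(sum_const hi)]; apply: sumA_le => a;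
  by apply: Rmult_le_compat_l => //; case: (w_bound a).
Qed.

Lemma sumA_sumS {St : countType} (F : A -> St -> R) :
  (forall a, summable (F a)) ->
  summable (fun s => sumA (fun a => F a s)) /\
  sumS (fun s => sumA (fun a => F a s)) = sumA (fun a => sumS (F a)).
Proof.
move=> F_ex; rewrite /sumA; elim: (enum A) => [|a s [IH_ex IH_sum]] /=.
  by split; [apply: summable_zero | apply: sumS_zero].
by split; [apply: summable_plus | rewrite sumS_plus // IH_sum].
Qed.

End FiniteSums.

Section MarkovChain.
Context {St : countType}.
Variable K : St -> St -> R.
Hypothesis K_dist : forall s, is_distS (K s).

Fixpoint chain_dist (s0 : St) (t : nat) : St -> R :=
  match t with
  | O => fun s => if s == s0 then 1 else 0
  | t'.+1 => fun s' => sumS (fun s => chain_dist s0 t' s * K s s')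
  end.

Definition disc_total (gamma : R) (f : St -> R) (s0 : St) : R :=
  Series (fun t => gamma ^ t * sumS (fun s => chain_dist s0 t s * f s)).

Lemma K_bound s s' : 0 <= K s s' <= 1.
Proof. by split; [case: (K_dist s) | apply: distS_le1]. Qed.

Lemma chain_dist0_point s0 s : s <> s0 -> chain_dist s0 0 s = 0.
Proof. by move=> /= /eqP /negbTE ->. Qed.

Lemma chain_dist_dist s0 t : is_distS (chain_dist s0 t).
Proof.
elim: t => [|t IH].
  have [d_ex d_sum] := sumS_point _ _ (chain_dist0_point s0).
  by split; [move=> s /=; case: eqP => _; lra | rewrite d_sum /= eqxx].
have [d_ge0 [d_ex d_sum]] := IH.
have step_bound s' := sumS_dist_bound _ (fun s => K s s') 0 1 IH (fun s => K_bound s s').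
pose F s s' := chain_dist s0 t s * K s s'.
have F_ge0 s s' : 0 <= F s s' by apply: Rmult_le_pos => //; case: (K_bound s s').
have F_row_ex s : summable (F s) by apply: summable_scal_l; case: (K_dist s) => _ [].
have F_rows s : sumS (F s) = chain_dist s0 t s.
  by rewrite sumS_scal_l; case: (K_dist s) => _ [_ ->]; ring.
have F_rows_ex : summable (fun s => sumS (F s)).
  by apply: summable_ext d_ex => s; rewrite F_rows.
have [cols_ex swap] := sumS_swap_nonneg _ F_ge0 F_row_ex F_rows_ex.
split; first by move=> s'; case: (step_bound s') => _ [].
split; first exact: cols_ex.
by rewrite /= swap -d_sum; apply: sumS_ext.
Qed.

Lemma chain_dist_bound s0 t s : 0 <= chain_dist s0 t s <= 1.
Proof.
have d_dist := chain_dist_dist s0 t.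
by split; [case: d_dist | apply: distS_le1].
Qed.

Lemma chain_distS s0 t x :
  chain_dist s0 t.+1 x = sumS (fun s' => K s0 s' * chain_dist s' t x).
Proof.
elim: t s0 x => [|t IH] s0 x.
  have point_l s : s <> s0 -> chain_dist s0 0 s * K s x = 0.
    by move=> /chain_dist0_point ->; ring.
  have point_r s' : s' <> x -> K s0 s' * chain_dist s' 0 x = 0.
    by move=> /eqP ne; rewrite /= eq_sym (negbTE ne); ring.
  rewrite [LHS]/=; have [_ ->] := sumS_point _ _ point_l.
  have [_ ->] := sumS_point _ _ point_r.
  by rewrite /= !eqxx; ring.
change (chain_dist s0 t.+2 x) with (sumS (fun s => chain_dist s0 t.+1 s * K s x)).
rewrite (sumS_ext _ (fun s => sumS (fun s' => K s0 s' * (chain_dist s' t s * K s x)))).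
  apply: (sumS_mixture_swap _ _ 1 (K_dist s0)) => s'.
  - by move=> s; apply: Rmult_le_pos; [case: (chain_dist_bound s' t s) | case: (K_bound s x)].
  - have Kx_bound s : 0 <= K s x <= 1 by apply: K_bound.
    by case: (sumS_dist_bound _ _ _ _ (chain_dist_dist s' t) Kx_bound).
  - by case: (chain_dist_bound s' t.+1 x).
by move=> s; rewrite IH -sumS_scal_r; apply: sumS_ext => s'; ring.
Qed.

Section BoundedNonneg.
Variables (f : St -> R) (C : R).
Hypothesis f_bound : forall s, 0 <= f s <= C.

Lemma chain_expect_bound s0 t :
  summable (fun s => chain_dist s0 t s * f s) /\
  0 <= sumS (fun s => chain_dist s0 t s * f s) <= C.
Proof. exact: sumS_dist_bound (chain_dist_dist s0 t) f_bound. Qed.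

Lemma chain_expectS s0 t :
  sumS (fun s => chain_dist s0 t.+1 s * f s) =
  sumS (fun s' => K s0 s' * sumS (fun s => chain_dist s' t s * f s)).
Proof.
rewrite (sumS_ext _ (fun s => sumS (fun s' => K s0 s' * (chain_dist s' t s * f s)))).
  apply: (sumS_mixture_swap _ _ C (K_dist s0)) => s'.
  - by move=> s; apply: Rmult_le_pos; [case: (chain_dist_bound s' t s) | case: (f_bound s)].
  - by case: (chain_expect_bound s' t).
  - by case: (chain_expect_bound s' t) => _ [].
by move=> s; rewrite chain_distS -sumS_scal_r; apply: sumS_ext => s'; ring.
Qed.

Variable gamma : R.
Hypothesis gamma_bound : 0 <= gamma < 1.

Lemma disc_total_bound s0 :
  ex_series (fun t => gamma ^ t * sumS (fun s => chain_dist s0 t s * f s)) /\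
  0 <= disc_total gamma f s0 <= C / (1 - gamma).
Proof.
have gamma_abs : Rabs gamma < 1 by rewrite Rabs_pos_eq; lra.
have geom_ex : ex_series (fun t => C * gamma ^ t).
  exact: ex_series_scal_l (ex_series_geom _ gamma_abs).
have term_bound t : 0 <= gamma ^ t * sumS (fun s => chain_dist s0 t s * f s) <= C * gamma ^ t.
  have [_ [E_ge0 E_le]] := chain_expect_bound s0 t.
  have := pow_le gamma t (proj1 gamma_bound); split; nra.
have total_ex : ex_series (fun t => gamma ^ t * sumS (fun s => chain_dist s0 t s * f s)).
  apply: ex_series_le geom_ex => t; rewrite /norm /= /abs /= Rabs_pos_eq.
    by case: (term_bound t).
  by case: (term_bound t).
split => //; split; first by apply: Series_ge0 => // t; case: (term_bound t).
rewrite /disc_total /Rdiv -(Series_geom _ gamma_abs) -Series_scal_l.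
exact: Series_le geom_ex.
Qed.

Lemma disc_total_bellman s0 :
  disc_total gamma f s0 = f s0 + gamma * sumS (fun s' => K s0 s' * disc_total gamma f s').
Proof.
have [total_ex _] := disc_total_bound s0.
rewrite /disc_total Series_incr_1 // pow_O Rmult_1_l.
have point s : s <> s0 -> chain_dist s0 0 s * f s = 0.
  by move=> /chain_dist0_point ->; ring.
have [_ ->] := sumS_point _ _ point.
rewrite /= eqxx Rmult_1_l; congr (_ + _).
pose F s' t := K s0 s' * (gamma ^ t * sumS (fun s => chain_dist s' t s * f s)).
have F_ge0 s' t : 0 <= F s' t.
  apply: Rmult_le_pos; first by case: (K_bound s0 s').
  have [_ [E_ge0 _]] := chain_expect_bound s' t.
  by apply: Rmult_le_pos => //; apply: pow_le; lra.
have F_row_ex s' : ex_series (F s').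
  by apply: ex_series_scal_l; case: (disc_total_bound s').
have F_rows_ex : summable (fun s' => Series (F s')).
  apply: summable_ext
    (proj1 (sumS_dist_bound _ _ _ _ (K_dist s0) (fun s' => proj2 (disc_total_bound s')))).
  by move=> s'; rewrite /F Series_scal_l.
have [_ swap] := sumS_Series_swap_nonneg _ F_ge0 F_row_ex F_rows_ex.
rewrite (sumS_ext _ (fun s' => Series (F s'))); last first.
  by move=> s'; rewrite /F Series_scal_l.
rewrite -swap -Series_scal_l; apply: Series_ext => t.
rewrite chain_expectS -!sumS_scal_l; apply: sumS_ext => s'; rewrite /F /=; ring.
Qed.

End BoundedNonneg.

Lemma bellman_fixpoint_unique gamma (r u1 u2 : St -> R) M :
  0 <= gamma < 1 -> (forall s, Rabs (u1 s) <= M) -> (forall s, Rabs (u2 s) <= M) ->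
  (forall s, u1 s = r s + gamma * sumS (fun s' => K s s' * u1 s')) ->
  (forall s, u2 s = r s + gamma * sumS (fun s' => K s s' * u2 s')) ->
  forall s, u1 s = u2 s.
Proof.
move=> gamma_bound u1_bound u2_bound u1_fix u2_fix.
have K_summable u s : (forall s', Rabs (u s') <= M) -> summable (fun s' => K s s' * u s').
  by move=> u_bound; apply: (proj1 (sumS_dist_bound _ u (- M) M (K_dist s) _)) => s';
    apply/Rabs_le_between.
have contract n s : Rabs (u1 s - u2 s) <= gamma ^ n * (2 * M).
  elim: n s => [|n IH] s.
    have := Rabs_triang (u1 s) (- u2 s); rewrite Rabs_Ropp /Rminus /=.
    by have := u1_bound s; have := u2_bound s; lra.
  have diff : u1 s - u2 s = gamma * sumS (fun s' => K s s' * (u1 s' - u2 s')).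
    rewrite [u1 s]u1_fix [u2 s]u2_fix (sumS_ext (fun s' => K s s' * (u1 s' - u2 s'))
      (fun s' => K s s' * u1 s' - K s s' * u2 s')); last first.
      by move=> s'; rewrite Rmult_minus_distr_l.
    by rewrite sumS_minus; [ring | apply: K_summable | apply: K_summable].
  have [_ /Rabs_le_between sum_bound] :=
    sumS_dist_bound _ _ _ _ (K_dist s) (fun s' => proj1 (Rabs_le_between _ _) (IH s')).
  rewrite diff Rabs_mult Rabs_pos_eq /=; last lra.
  by rewrite Rmult_assoc; apply: Rmult_le_compat_l; lra.
have gamma_lim : is_lim_seq (fun n => gamma ^ n * (2 * M)) 0.
  have := is_lim_seq_scal_r _ (2 * M) _ (is_lim_seq_geom gamma _).
  by rewrite /= Rmult_0_l; apply; rewrite Rabs_pos_eq; lra.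
move=> s; suff /Rabs_le_between : Rabs (u1 s - u2 s) <= 0 by lra.
exact: (is_lim_seq_le _ _ _ _ (fun n => contract n s) (is_lim_seq_const _) gamma_lim).
Qed.

End MarkovChain.

Lemma Lub_Rbar_ge (E : R -> Prop) m y :
  (forall x, E x -> x <= m) -> E y -> y <= real (Lub_Rbar E).
Proof.
move=> E_le Ey; have [E_ub E_lub] := Lub_Rbar_correct E.
have lub_le : Rbar_le (Lub_Rbar E) m by apply: E_lub => x /E_le.
by move: lub_le (E_ub y Ey); case: (Lub_Rbar E).
Qed.

Section SwitchingGame.
Context {St : countType} {A : finType}.
Variables (P : St -> A -> St -> R) (piE : St -> A -> R) (gamma beta B : R)
  (L : St -> A -> R).
Hypotheses (P_kernel : is_kernel P) (piE_policy : is_policy piE)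
  (gamma_bound : 0 <= gamma < 1) (beta_ge0 : 0 <= beta)
  (L_ge0 : forall s a, 0 <= L s a) (L_le : forall s a, L s a <= B).

Definition trans (piX : St -> A -> R) (g : St -> bool) (s s' : St) : R :=
  sumA (fun a => act_dist piE piX g s a * P s a s').

Local Notation reward := (reward piE beta L).
Local Notation value := (value P piE gamma beta L).
Local Notation vstar := (vstar P piE gamma beta L).
Local Notation Mop := (Mop P gamma beta L).
Local Notation gstar := (gstar P gamma beta L).

Lemma act_dist_dist piX g s : is_policy piX -> is_distA (act_dist piE piX g s).
Proof. by rewrite /act_dist; case: (g s). Qed.

Lemma trans_dist piX g s : is_policy piX -> is_distS (trans piX g s).
Proof.
move=> piX_policy; have act_d := act_dist_dist piX g s piX_policy.
have P_bound a s' : 0 <= P s a s' <= 1.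
  by split; [case: (P_kernel s a) | apply: distS_le1].
have row_ex a : summable (fun s' => act_dist piE piX g s a * P s a s').
  by apply: summable_scal_l; case: (P_kernel s a) => _ [].
have [trans_ex trans_sum] := sumA_sumS _ row_ex.
split; first by move=> s'; case: (sumA_dist_bound _ _ 0 1 act_d (fun a => P_bound a s')).
split; first exact: trans_ex.
rewrite /trans trans_sum (sumA_ext _ (fun a => act_dist piE piX g s a * 1)).
  by rewrite sumA_scal_r; case: act_d => _ ->; ring.
by move=> a; rewrite sumS_scal_l; case: (P_kernel s a) => _ [_ ->].
Qed.

Lemma state_dist_chain piX g s0 t s :
  state_dist P piE piX g s0 t s = chain_dist (trans piX g) s0 t s.
Proof. by elim: t s => [|t IH] s //=; apply: sumS_ext => s'; rewrite IH. Qed.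

Lemma reward_bounds piX g s : is_policy piX ->
  - (B + (if g s then beta else 0)) <= reward piX g s <= - (if g s then beta else 0).
Proof.
move=> piX_policy; apply: sumA_dist_bound; first exact: act_dist_dist.
by move=> a; have := L_ge0 s a; have := L_le s a; lra.
Qed.

Lemma reward_nonpos piX g s : is_policy piX -> - (B + beta) <= reward piX g s <= 0.
Proof. by move=> /(reward_bounds piX g s); case: (g s); lra. Qed.

(* Rewards are nonpositive: working with the nonnegative cost [- reward] keeps
   every interchange of summations within Tonelli's theorem. *)
Lemma value_disc_total piX g s :
  value piX g s = - disc_total (trans piX g) gamma (fun s => - reward piX g s) s.
Proof.
rewrite /Defs.value /disc_total -Series_opp; apply: Series_ext => t.
rewrite /exp_reward Ropp_mult_distr_r -sumS_opp; congr (_ * _).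
by apply: sumS_ext => s'; rewrite state_dist_chain; ring.
Qed.

Lemma value_bound piX g lo : is_policy piX -> (forall s, lo <= reward piX g s <= 0) ->
  forall s, lo / (1 - gamma) <= value piX g s <= 0.
Proof.
move=> piX_policy r_bound s; rewrite value_disc_total.
have cost_bound s' : 0 <= - reward piX g s' <= - lo by have := r_bound s'; lra.
have trans_d s' := trans_dist piX g s' piX_policy.
have [_ total_bound] := disc_total_bound _ trans_d _ _ cost_bound _ gamma_bound s.
by rewrite Rdiv_opp_l in total_bound; lra.
Qed.

Lemma value_bellman piX g s : is_policy piX ->
  value piX g s = reward piX g s + gamma * sumS (fun s' => trans piX g s s' * value piX g s').
Proof.
move=> piX_policy.
have cost_bound s' : 0 <= - reward piX g s' <= B + beta.
  by have := reward_nonpos piX g s' piX_policy; lra.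
have trans_d s' := trans_dist piX g s' piX_policy.
rewrite value_disc_total (disc_total_bellman _ trans_d _ _ cost_bound _ gamma_bound).
rewrite (sumS_ext _ (fun s' => - (trans piX g s s' * value piX g s'))) ?sumS_opp; first ring.
by move=> s'; rewrite value_disc_total; ring.
Qed.

Lemma value_abs_bound piX g s : is_policy piX ->
  Rabs (value piX g s) <= (B + beta) / (1 - gamma).
Proof.
move=> piX_policy.
have := value_bound _ _ _ piX_policy (fun s => reward_nonpos piX g s piX_policy) s.
by rewrite Rdiv_opp_l => v_bound; rewrite Rabs_left1; lra.
Qed.

Lemma Mop_trans piX g v M s : (forall s, Rabs (v s) <= M) -> g s = true ->
  reward piX g s + gamma * sumS (fun s' => trans piX g s s' * v s') = Mop piX v s.
Proof.
move=> v_bound gs_true.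
have row_ex a : summable (fun s' => piX s a * (P s a s' * v s')).
  apply: summable_scal_l; apply: (proj1 (sumS_dist_bound _ v (- M) M (P_kernel s a) _)).
  by move=> s'; apply/Rabs_le_between.
have [_ swap] := sumA_sumS _ row_ex.
rewrite /Defs.reward /trans /act_dist gs_true /Defs.Mop.
rewrite (sumS_ext _ (fun s' => sumA (fun a => piX s a * (P s a s' * v s')))); last first.
  by move=> s'; rewrite -sumA_scal_r; apply: sumA_ext => a; ring.
rewrite swap -sumA_scal_l -sumA_plus; apply: sumA_ext => a; rewrite sumS_scal_l; ring.
Qed.

Lemma gstar_fixpoint piX g v M : (forall s, Rabs (v s) <= M) ->
  (forall s, v s = reward piX g s + gamma * sumS (fun s' => trans piX g s s' * v s')) ->
  forall s, v s = reward piX (gstar piX v) s +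
    gamma * sumS (fun s' => trans piX (gstar piX v) s s' * v s').
Proof.
move=> v_bound v_fix s.
case gs: (gstar piX v s).
  by rewrite (Mop_trans _ _ _ M) //; move: gs; rewrite /Defs.gstar; case: Req_EM_T.
have g_false : g s = false.
  apply/negbTE/negP => gs_true.
  have M_fix : Mop piX v s = v s by rewrite [RHS]v_fix (Mop_trans _ _ _ M).
  by move: gs; rewrite /Defs.gstar; case: Req_EM_T.
by rewrite {1}v_fix /Defs.reward /trans /act_dist gs g_false.
Qed.

Lemma value_le_vstar piX g s : is_policy piX -> value piX g s <= vstar s.
Proof.
move=> piX_policy; apply: (Lub_Rbar_ge _ 0); last by exists piX, g.
move=> x [piX' [g' [piX'_policy ->]]].
have r_bound s' := reward_nonpos piX' g' s' piX'_policy.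
exact: (proj2 (value_bound _ _ _ piX'_policy r_bound s)).
Qed.

Lemma value_gstar piX g0 : is_optimal P piE gamma beta L piX g0 ->
  forall s, value piX (gstar piX vstar) s = vstar s.
Proof.
move=> [piX_policy g0_opt].
have vstar_bound s : Rabs (vstar s) <= (B + beta) / (1 - gamma).
  by rewrite -g0_opt; apply: value_abs_bound.
have vstar_fix s :
    vstar s = reward piX g0 s + gamma * sumS (fun s' => trans piX g0 s s' * vstar s').
  rewrite -g0_opt value_bellman //; congr (_ + _ * _).
  by apply: sumS_ext => s'; rewrite g0_opt.
apply: (bellman_fixpoint_unique _ (fun s => trans_dist piX _ s piX_policy) gamma
  (reward piX (gstar piX vstar)) _ _ _ gamma_bound).
- by move=> s; apply: value_abs_bound.
- exact: vstar_bound.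
- by move=> s; apply: value_bellman.
- exact: gstar_fixpoint vstar_bound vstar_fix.
Qed.

Lemma optimal_no_switch piX g : B < beta * (1 - gamma) ->
  is_optimal P piE gamma beta L piX g -> forall s, g s = false.
Proof.
move=> B_small [piX_policy g_opt] s; apply/negbTE/negP => gs_true.
have vstar_le : vstar s <= - beta.
  rewrite -g_opt value_bellman //.
  have := reward_bounds piX g s piX_policy; rewrite gs_true => r_bound.
  have [_ [_ sum_le0]] := sumS_dist_bound _ _ _ _ (trans_dist piX g s piX_policy)
    (value_bound _ _ _ piX_policy (fun s => reward_nonpos piX g s piX_policy)).
  by have := proj1 gamma_bound; nra.
have vstar_ge : - B / (1 - gamma) <= vstar s.
  apply: Rle_trans (value_le_vstar piX (fun _ => false) s piX_policy).
  apply: (proj1 (value_bound piX (fun _ => false) (- B) piX_policy _ s)) => s'.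
  by have := reward_bounds piX (fun _ => false) s' piX_policy; rewrite /= Rplus_0_r Ropp_0.
have : - B / (1 - gamma) <= - beta by lra.
by rewrite Rle_div_l; lra.
Qed.

End SwitchingGame.

Lemma mu_no_switch {St : countType} {A : finType} (P : St -> A -> St -> R) piE piX g s0 :
  (forall s, g s = false) -> mu P piE piX g s0 = 0.
Proof.
move=> g_false; rewrite /mu (Lim_seq_ext _ (fun _ => 0)) ?Lim_seq_const // => n.
rewrite (sum_n_ext _ (fun _ => 0)) ?sum_n_const ?Rmult_0_r // => t.
by rewrite (sumS_ext _ (fun _ => 0)) ?sumS_zero // => s; rewrite g_false Rmult_0_r.
Qed.

Theorem proposition2 (St : countType) (A : finType) (P : St -> A -> St -> R)
  (piE : St -> A -> R) (gamma beta : R) (L : St -> A -> R) :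
  is_kernel P -> is_policy piE -> 0 < gamma < 1 -> 0 < beta ->
  (forall s a, 0 <= L s a) -> (exists B, forall s a, L s a <= B) ->
  (* (i) *)
  (forall (piX : St -> A -> R) (g0 : St -> bool),
     is_optimal P piE gamma beta L piX g0 ->
     forall s,
       value P piE gamma beta L piX
         (gstar P gamma beta L piX (vstar P piE gamma beta L)) s
       = vstar P piE gamma beta L s)
  /\
  (* (ii) *)
  (forall (s0 : St) (eps : R), 0 < eps ->
     exists delta, 0 < delta /\
       forall (L' : St -> A -> R) (l : R), 0 < l < delta ->
         (forall s a, 0 <= L' s a) -> (forall s a, L' s a <= l) ->
         (exists s a, L' s a = l) ->
         forall (piX : St -> A -> R) (g : St -> bool),
           is_optimal P piE gamma beta L' piX g ->
           Rbar_le (mu P piE piX g s0) eps).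
Proof.
move=> P_kernel piE_policy gamma_pos beta_pos L_ge0 [B L_le].
have gamma_bound : 0 <= gamma < 1 by lra.
have beta_ge0 : 0 <= beta by lra.
split.
  exact: value_gstar _ _ _ _ _ _ P_kernel piE_policy gamma_bound beta_ge0 L_ge0 L_le.
move=> s0 eps eps_pos; exists (beta * (1 - gamma)); split; first by nra.
move=> L' l [_ l_small] L'_ge0 L'_le _ piX g g_opt.
have no_switch := optimal_no_switch _ _ _ _ _ _ P_kernel piE_policy gamma_bound beta_ge0
  L'_ge0 L'_le _ _ l_small g_opt.
by rewrite (mu_no_switch _ _ _ _ _ no_switch) /=; lra.
Qed.
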